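(* The coderivation $d_\psi$ restricts to a differential on $\mathcal{G}^{¡}$, and the counit $(\mathcal{G}^{¡},d_\psi)\to(\mathrm{I},0)$, the coaugmentation $(\mathrm{I},0)\to(\mathcal{G}^{¡},d_\psi)$ and the homotopy $H$ form a deformation retract of dg $\mathbb{S}$-modules. In particular $H_\bullet(\mathcal{G}^{¡},d_\psi)\cong\mathrm{I}$.
   Context: $M$ is spanned by arity-2 elements $\mu=s\bullet$ (degree 1), $\beta=s\langle\,,\rangle$ (degree 2) with trivial $\mathbb{S}_2$-action; $\mathcal{G}=\mathcal{T}(s^{-1}M)/(R)$ is the Gerstenhaber operad and $\mathcal{G}^{¡}\subset\mathcal{T}^c(M)$ its Koszul dual cooperad. $d_\psi$ is the coderivation of $\mathcal{T}^c(M)$ extending $\psi:\mathcal{T}^c(M)\twoheadrightarrow M$, $\mu\mapsto\beta,\beta\mapsto 0$. $H$: for a decorated binary tree with $n$ vertices, $H$ is $\sum_v\frac{\omega(v)}{\binom{n+1}{2}}$ times the tree with $h$ ($\beta\mapsto\mu$, $\mu\mapsto0$) applied at vertex $v$, with Koszul sign, where $\omega(v)=m_vn_v$ is the product of the numbers of leaves above the two inputs of $v$. $\mathrm{I}$ is the unit $\mathbb{S}$-module (one-dimensional in arity 1, degree 0). *)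

From HB Require Import structures.
From mathcomp Require Import all_boot all_order all_fingroup all_algebra.
Set Implicit Arguments.
Unset Strict Implicit.
Unset Printing Implicit Defensive.
Import GRing.Theory.
Local Open Scope ring_scope.

(** A vertex decorated by [false] is mu = s(product), degree 1;
   a vertex decorated by [true] is beta = s<,>, degree 2.
   Leaves carry labels (natural numbers); an arity-n tree is one whose
   leaf labels, read left to right, form a permutation of 0,...,n-1. *)
Inductive tree : Type :=
| Lf of nat
| Nd of bool & tree & tree.

Definition degv (b : bool) : nat := if b then 2 else 1.

Fixpoint deg (t : tree) : nat :=
  match t with Lf _ => 0 | Nd b l r => (degv b + deg l + deg r)%N end.

Fixpoint leaves (t : tree) : seq nat :=
  match t with Lf i => [:: i] | Nd _ l r => leaves l ++ leaves r end.

Definition nleaves (t : tree) : nat := size (leaves t).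

Fixpoint nvert (t : tree) : nat :=
  match t with Lf _ => 0 | Nd _ l r => (nvert l + nvert r).+1 end.

Definition valid (n : nat) (t : tree) : bool := perm_eq (leaves t) (iota 0 n).

(** Swapping the two children of one vertex; the nat is the exponent of
    the Koszul sign (-1)^(|l||r|) (the S_2-action on M is trivial). *)
Inductive swap1 : tree -> tree -> nat -> Prop :=
| sw_root b l r : swap1 (Nd b l r) (Nd b r l) (deg l * deg r)
| sw_left b l l' r e : swap1 l l' e -> swap1 (Nd b l r) (Nd b l' r) e
| sw_right b l r r' e : swap1 r r' e -> swap1 (Nd b l r) (Nd b l r') e.

(** An element of T^c(M)(n) is represented by its coefficient function
    on planar labelled trees, which is Koszul-symmetric under swaps and
    supported on arity-n trees (the element is sum_t f(t) t). *)
Definition Tc (F : fieldType) (n : nat) (f : tree -> F) : Prop :=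
  (forall t, ~~ valid n t -> f t = 0) /\
  (forall t t' e, swap1 t t' e -> f t' = (-1) ^+ e * f t).

(** The coderivation d_psi (psi : mu |-> beta, beta |-> 0), applied at
    each vertex with the Koszul sign (-1)^(degrees of the vertices
    preceding it in preorder).  [dsum g t pre] computes the coefficient
    of t in d(x), where g is f precomposed with the ambient context. *)
Fixpoint dsum (F : fieldType) (g : tree -> F) (t : tree) (pre : nat) : F :=
  match t with
  | Lf _ => 0
  | Nd b l r =>
      (if b then (-1) ^+ pre * g (Nd false l r) else 0)
      + dsum (fun l' => g (Nd b l' r)) l (pre + degv b)
      + dsum (fun r' => g (Nd b l r')) r (pre + degv b + deg l)
  end.

Definition dpsi (F : fieldType) (f : tree -> F) : tree -> F :=
  fun t => dsum f t 0.

(** The homotopy H: h : beta |-> mu, mu |-> 0 applied at vertex v with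
    weight omega(v) = m_v n_v (numbers of leaves above the two inputs of v),
    divided by binomial(n+1, 2), n the number of vertices. *)
Fixpoint hsum (F : fieldType) (g : tree -> F) (t : tree) (pre : nat) : F :=
  match t with
  | Lf _ => 0
  | Nd b l r =>
      (if b then 0
       else (-1) ^+ pre * (nleaves l * nleaves r)%:R * g (Nd true l r))
      + hsum (fun l' => g (Nd b l' r)) l (pre + degv b)
      + hsum (fun r' => g (Nd b l r')) r (pre + degv b + deg l)
  end.

Definition Hop (F : fieldType) (f : tree -> F) : tree -> F :=
  fun t => ('C((nvert t).+1, 2))%:R^-1 * hsum f t 0.

(** ** Corelations s^2 R in arity 3 (leaves 0,1,2).
    [mirr t t'] : t and t' agree up to swapping children (in arity 3 all
    Koszul signs of swaps are +1, leaves having degree 0). *)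
Fixpoint mirr (t t' : tree) : bool :=
  match t, t' with
  | Lf i, Lf j => i == j
  | Nd b l r, Nd b' l' r' =>
      (b == b') && ((mirr l l' && mirr r r') || (mirr l r' && mirr r l'))
  | _, _ => false
  end.

Definition cls (F : fieldType) (t0 : tree) : tree -> F :=
  fun t => if mirr t0 t then 1 else 0.

Notation MU := false.
Notation BE := true.

(** Generators of s^2 R, where R are the relations of the Gerstenhaber
    operad G = T(s^{-1}M)/(R) (associativity of the product, Jacobi for
    the degree-1 bracket, Leibniz), transported by s^2. *)
Definition s2R_gen (F : fieldType) (i : 'I_6) : tree -> F :=
  match val i with
  | 0 => fun t => cls F (Nd MU (Nd MU (Lf 0) (Lf 1)) (Lf 2)) t
                  - cls F (Nd MU (Nd MU (Lf 1) (Lf 2)) (Lf 0)) t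
  | 1 => fun t => cls F (Nd MU (Nd MU (Lf 1) (Lf 2)) (Lf 0)) t
                  - cls F (Nd MU (Nd MU (Lf 0) (Lf 2)) (Lf 1)) t
  | 2 => fun t => cls F (Nd BE (Nd BE (Lf 0) (Lf 1)) (Lf 2)) t
                  + cls F (Nd BE (Nd BE (Lf 1) (Lf 2)) (Lf 0)) t
                  + cls F (Nd BE (Nd BE (Lf 0) (Lf 2)) (Lf 1)) t
  | 3 => fun t => cls F (Nd BE (Nd MU (Lf 1) (Lf 2)) (Lf 0)) t
                  + cls F (Nd MU (Nd BE (Lf 1) (Lf 0)) (Lf 2)) t
                  + cls F (Nd MU (Nd BE (Lf 2) (Lf 0)) (Lf 1)) t
  | 4 => fun t => cls F (Nd BE (Nd MU (Lf 0) (Lf 2)) (Lf 1)) t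
                  + cls F (Nd MU (Nd BE (Lf 0) (Lf 1)) (Lf 2)) t
                  + cls F (Nd MU (Nd BE (Lf 2) (Lf 1)) (Lf 0)) t
  | _ => fun t => cls F (Nd BE (Nd MU (Lf 0) (Lf 1)) (Lf 2)) t
                  + cls F (Nd MU (Nd BE (Lf 0) (Lf 2)) (Lf 1)) t
                  + cls F (Nd MU (Nd BE (Lf 1) (Lf 2)) (Lf 0)) t
  end.

Definition in_s2R (F : fieldType) (g : tree -> F) : Prop :=
  exists c : 'I_6 -> F,
    forall s, valid 3 s -> g s = \sum_(i < 6) c i * s2R_gen F i s.

(** One-hole contexts, grafting of three input trees A B C on the leaves
    0 1 2 of an arity-3 tree, and the Koszul sign of bringing the
    decorations of the arity-3 piece in front of the blocks A, B, C
    (in this order). *)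
Inductive ctx : Type :=
| Hole
| CL of bool & ctx & tree
| CR of bool & tree & ctx.

Fixpoint plug (c : ctx) (t : tree) : tree :=
  match c with
  | Hole => t
  | CL b c' r => Nd b (plug c' t) r
  | CR b l c' => Nd b l (plug c' t)
  end.

Fixpoint graft3 (s A B C : tree) : tree :=
  match s with
  | Lf 0 => A
  | Lf 1 => B
  | Lf _ => C
  | Nd b l r => Nd b (graft3 l A B C) (graft3 r A B C)
  end.

(* tokens (key, degree) in preorder: decorations get key 0, the block
   grafted on leaf i gets key i+1 *)
Fixpoint toks (s A B C : tree) : seq (nat * nat) :=
  match s with
  | Lf 0 => [:: (1, deg A)]
  | Lf 1 => [:: (2, deg B)]
  | Lf _ => [:: (3, deg C)]
  | Nd b l r => (0, degv b) :: toks l A B C ++ toks r A B C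
  end%N.

Fixpoint kinv (l : seq (nat * nat)) : nat :=
  match l with
  | [::] => 0
  | a :: l' => (\sum_(x <- l' | x.1 < a.1) a.2 * x.2 + kinv l')%N
  end.

Definition ksign (F : fieldType) (s A B C : tree) : F :=
  (-1) ^+ kinv (toks s A B C).

(** The Koszul dual cooperad G^¡(n) inside T^c(M)(n): the sub-cooperad
    cogenerated by M with corelations s^2 R, i.e. the elements whose
    component at every internal edge lies in s^2 R. *)
Definition Gshriek (F : fieldType) (n : nat) (f : tree -> F) : Prop :=
  Tc n f /\
  forall (c : ctx) (A B C : tree),
    in_s2R (fun s => ksign F s A B C * f (plug c (graft3 s A B C))).

(** Counit G^¡ -> I and coaugmentation I -> G^¡, arity by arity:
    I(1) = F (the trivial tree Lf 0), I(n) = 0 for n <> 1. *)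
Definition counit (F : fieldType) (n : nat) (f : tree -> F) : F :=
  if n == 1%N then f (Lf 0) else 0.

Definition coaug (F : fieldType) (n : nat) (x : F) : tree -> F :=
  fun t => match t with
           | Lf 0 => if n == 1%N then x else 0
           | _ => 0
           end.

Definition permf (n : nat) (s : 'S_n) (i : nat) : nat :=
  oapp (fun j : 'I_n => val (s j)) i (insub i).

Fixpoint relabel (p : nat -> nat) (t : tree) : tree :=
  match t with
  | Lf i => Lf (p i)
  | Nd b l r => Nd b (relabel p l) (relabel p r)
  end.

From HB Require Import structures.
From mathcomp Require Import all_boot all_order all_fingroup all_algebra.
From mathcomp Require Import ring zify.
Import GRing.Theory.
Local Open Scope ring_scope.
Set Implicit Arguments. Unset Strict Implicit.

(* Both d_psi and, up to the factor 1/C(n+1,2), the homotopy H are vertex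
   sums [vsum b0 w]: sum over the vertices decorated b0 of the tree with
   that decoration flipped, weighted by w(m_v, n_v) and a Koszul sign.

   1. Vertex sums at distinct vertices commute up to sign; this gives
      d_psi^2 = 0 and d_psi h + h d_psi = C(#leaves, 2) on every tree, since
      exactly one of psi h, h psi is the identity at each vertex and
      sum_v m_v n_v = C(#leaves, 2).  In characteristic 0 this is the
      homotopy formula id - coaug o counit = d_psi H + H d_psi.
   2. Vertex sums with symmetric weights preserve Koszul symmetry (Tc).
   3. Corelations: at an internal edge, a vertex sum of a grafted tree
      splits into the vertices of the arity-3 piece, handled by an explicit
      arity-3 computation (psi and h preserve s^2 R), and the vertices of
      the grafted blocks, handled by the corelations of the input;
      induction on the context of the edge finishes the argument. *)

Section VertexSums.
Variable F : fieldType.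
Implicit Types (g : tree -> F) (t l r : tree).

Fixpoint vsum (b0 : bool) (w : nat -> nat -> F) g t (pre : nat) : F :=
  match t with
  | Lf _ => 0
  | Nd b l r =>
     (if b == b0 then (-1) ^+ pre * w (nleaves l) (nleaves r) * g (Nd (~~ b) l r)
      else 0)
     + vsum b0 w (fun l' => g (Nd b l' r)) l (pre + degv b)%N
     + vsum b0 w (fun r' => g (Nd b l r')) r (pre + degv b + deg l)%N
  end.

Definition dweight (a b : nat) : F := 1.
Definition hweight (a b : nat) : F := (a * b)%:R.

Lemma dsum_vsum g t pre : dsum g t pre = vsum true dweight g t pre.
Proof.
elim: t g pre => //= b l IHl r IHr g pre; rewrite IHl IHr.
by case: b; rewrite /= ?/dweight ?mulr1.
Qed.

Lemma hsum_vsum g t pre : hsum g t pre = vsum false hweight g t pre.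
Proof. by elim: t g pre => //= b l IHl r IHr g pre; rewrite IHl IHr; case: b. Qed.

Lemma dpsiE g t : dpsi g t = vsum true dweight g t 0.
Proof. exact: dsum_vsum. Qed.

Lemma HopE g t :
  Hop g t = ('C((nvert t).+1, 2))%:R^-1 * vsum false hweight g t 0.
Proof. by rewrite /Hop hsum_vsum. Qed.

(* [flip b0 t u]: u is t with one b0-decorated vertex flipped; these are
   the only trees at which [vsum b0 w g t pre] evaluates g. *)
Inductive flip (b0 : bool) : tree -> tree -> Prop :=
| flip_root l r : flip b0 (Nd b0 l r) (Nd (~~ b0) l r)
| flip_left b l l' r : flip b0 l l' -> flip b0 (Nd b l r) (Nd b l' r)
| flip_right b l r r' : flip b0 r r' -> flip b0 (Nd b l r) (Nd b l r').

Lemma vsum_ext b0 w g g' t pre :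
  (forall u, flip b0 t u -> g u = g' u) -> vsum b0 w g t pre = vsum b0 w g' t pre.
Proof.
elim: t g g' pre => //= b l IHl r IHr g g' pre E.
rewrite (IHl _ (fun l' => g' (Nd b l' r))); last by move=> u ?; apply/E/flip_left.
rewrite (IHr _ (fun r' => g' (Nd b l r'))); last by move=> u ?; apply/E/flip_right.
by case: eqP => // Eb; rewrite E // Eb; apply: flip_root.
Qed.
Arguments vsum_ext {b0 w g} g' {t pre}.

Lemma flip_leaves b0 t u : flip b0 t u -> leaves u = leaves t.
Proof. by elim=> //= *; congruence. Qed.

Lemma flip_nleaves b0 t u : flip b0 t u -> nleaves u = nleaves t.
Proof. by move=> /flip_leaves; rewrite /nleaves => ->. Qed.

Lemma flip_nvert b0 t u : flip b0 t u -> nvert u = nvert t.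
Proof. by elim=> //= *; congruence. Qed.

Lemma flip_odd b0 t u : flip b0 t u -> odd (deg u) = ~~ odd (deg t).
Proof.
elim=> /= [l r|b l l' r _ IH|b l r r' _ IH]; rewrite !oddD ?IH ?addbN ?addNb //.
by case: b0; case: (odd (deg l)); case: (odd (deg r)).
Qed.

Lemma vsumZ b0 w (k : F) g t pre :
  vsum b0 w (fun u => k * g u) t pre = k * vsum b0 w g t pre.
Proof.
elim: t g pre => /= [_ _ _|b l IHl r IHr g pre]; first by rewrite mulr0.
by rewrite IHl IHr; case: eqP => _; ring.
Qed.

Lemma vsumD b0 w g g' t pre :
  vsum b0 w (fun u => g u + g' u) t pre = vsum b0 w g t pre + vsum b0 w g' t pre.
Proof.
elim: t g g' pre => /= [_ _ _ _|b l IHl r IHr g g' pre]; first by rewrite addr0.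
by rewrite IHl IHr; case: eqP => _; ring.
Qed.

Lemma vsum0 b0 w t pre : vsum b0 w (fun _ => 0) t pre = 0.
Proof.
by elim: t pre => //= b l IHl r IHr pre; rewrite IHl IHr; case: eqP => _; ring.
Qed.

Lemma vsum_pre b0 w g t pre : vsum b0 w g t pre = (-1) ^+ pre * vsum b0 w g t 0.
Proof.
have shift : forall p k, vsum b0 w g t (p + k) = (-1) ^+ p * vsum b0 w g t k.
  elim: t g => [_|b l IHl r IHr g] p k /=; first by rewrite mulr0.
  by rewrite -!addnA IHl IHr exprD; case: eqP => _; ring.
by rewrite -shift addn0.
Qed.

Lemma vsum_Nd b0 w g b l r :
  vsum b0 w g (Nd b l r) 0 =
    (if b == b0 then w (nleaves l) (nleaves r) else 0) * g (Nd (~~ b) l r)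
    + (-1) ^+ degv b * vsum b0 w (fun x => g (Nd b x r)) l 0
    + (-1) ^+ degv b * (-1) ^+ deg l * vsum b0 w (fun y => g (Nd b l y)) r 0.
Proof.
rewrite /= [vsum _ _ _ l _]vsum_pre [vsum _ _ _ r _]vsum_pre add0n exprD.
by case: eqP => _; ring.
Qed.

(* Every tree evaluated by [vsum] has degree of the opposite parity. *)
Lemma vsum_sign_deg b0 w k g t pre :
  vsum b0 w (fun x => (-1) ^+ (k * deg x) * g x) t pre
  = (-1) ^+ (k * (deg t).+1) * vsum b0 w g t pre.
Proof.
rewrite -vsumZ; apply: vsum_ext => u /flip_odd Hu; congr (_ * _).
by rewrite -signr_odd -[in RHS]signr_odd !oddM Hu.
Qed.

Lemma vsum_comm b0 w b1 w1 (G : tree -> tree -> F) t1 t2 :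
  vsum b0 w (fun x => vsum b1 w1 (G x) t2 0) t1 0
  = vsum b1 w1 (fun y => vsum b0 w (fun x => G x y) t1 0) t2 0.
Proof.
elim: t1 G => [i|b l IHl r IHr] G; first by rewrite /= vsum0.
rewrite vsum_Nd (IHl (fun x => G (Nd b x r))) (IHr (fun y => G (Nd b l y))).
rewrite [RHS](vsum_ext (fun y =>
    (if b == b0 then w (nleaves l) (nleaves r) else 0) * G (Nd (~~ b) l r) y
    + (-1) ^+ degv b * vsum b0 w (fun x => G (Nd b x r) y) l 0
    + (-1) ^+ degv b * (-1) ^+ deg l * vsum b0 w (fun x => G (Nd b l x) y) r 0));
  last by move=> u _; rewrite vsum_Nd.
by rewrite !vsumD !vsumZ.
Qed.

(* Terms acting
   on both subtrees are normalised with the sum over l outermost. *)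
Lemma vsum_vsum_left b1 w1 b0 w g b l r :
  vsum b1 w1 (fun x => vsum b0 w g (Nd b x r) 0) l 0 =
    (if b == b0 then w (nleaves l) (nleaves r) else 0)
      * vsum b1 w1 (fun x => g (Nd (~~ b) x r)) l 0
    + (-1) ^+ degv b * vsum b1 w1 (fun x => vsum b0 w (fun x' => g (Nd b x' r)) x 0) l 0
    - (-1) ^+ degv b * (-1) ^+ deg l
      * vsum b1 w1 (fun x => vsum b0 w (fun y => g (Nd b x y)) r 0) l 0.
Proof.
rewrite (vsum_ext (fun x =>
    (if b == b0 then w (nleaves l) (nleaves r) else 0) * g (Nd (~~ b) x r)
    + (-1) ^+ degv b * vsum b0 w (fun x' => g (Nd b x' r)) x 0
    + (-1) ^+ degv b * ((-1) ^+ (1 * deg x) * vsum b0 w (fun y => g (Nd b x y)) r 0)));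
  last by move=> u Hu; rewrite vsum_Nd (flip_nleaves Hu) mul1n mulrA.
rewrite !vsumD !vsumZ vsum_sign_deg mul1n exprS; ring.
Qed.

Lemma vsum_vsum_right b1 w1 b0 w g b l r :
  vsum b1 w1 (fun y => vsum b0 w g (Nd b l y) 0) r 0 =
    (if b == b0 then w (nleaves l) (nleaves r) else 0)
      * vsum b1 w1 (fun y => g (Nd (~~ b) l y)) r 0
    + (-1) ^+ degv b * vsum b0 w (fun x => vsum b1 w1 (fun y => g (Nd b x y)) r 0) l 0
    + (-1) ^+ degv b * (-1) ^+ deg l
      * vsum b1 w1 (fun y => vsum b0 w (fun y' => g (Nd b l y')) y 0) r 0.
Proof.
rewrite (vsum_ext (fun y =>
    (if b == b0 then w (nleaves l) (nleaves r) else 0) * g (Nd (~~ b) l y)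
    + (-1) ^+ degv b * vsum b0 w (fun x => g (Nd b x y)) l 0
    + (-1) ^+ degv b * (-1) ^+ deg l * vsum b0 w (fun y' => g (Nd b l y')) y 0));
  last by move=> u Hu; rewrite vsum_Nd (flip_nleaves Hu).
by rewrite !vsumD !vsumZ -vsum_comm.
Qed.

Lemma sign_degv b : (-1) ^+ degv b = (if b then 1 else -1 : F).
Proof. by case: b; rewrite /= ?expr1 // -signr_odd. Qed.

(* d_psi squares to zero: psi o psi = 0 at one vertex, and terms at two
   distinct vertices cancel in pairs by the Koszul sign rule. *)
Lemma vsum_d_d g t : vsum true dweight (fun u => vsum true dweight g u 0) t 0 = 0.
Proof.
elim: t g => [i|b l IHl r IHr] g //.
rewrite vsum_Nd vsum_vsum_left vsum_vsum_right vsum_Nd !IHl !IHr /dweight.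
by rewrite !sign_degv; case: b => /=; rewrite ?vsum0; ring.
Qed.

Lemma nleaves_Nd b l r : nleaves (Nd b l r) = (nleaves l + nleaves r)%N.
Proof. by rewrite /nleaves /= size_cat. Qed.

Lemma bin2D a b : 'C(a + b, 2) = ('C(a, 2) + 'C(b, 2) + a * b)%N.
Proof.
elim: b => [|b IH]; first by rewrite addn0 bin0n muln0 !addn0.
by rewrite addnS binS IH bin1 binS bin1; lia.
Qed.

(* d_psi h + h d_psi is multiplication by sum_v m_v n_v = C(#leaves, 2):
   at each vertex exactly one of psi h, h psi is the identity. *)
Lemma vsum_dh_hd g t :
  vsum true dweight (fun u => vsum false hweight g u 0) t 0
  + vsum false hweight (fun u => vsum true dweight g u 0) t 0
  = ('C(nleaves t, 2))%:R * g t.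
Proof.
elim: t g => [i|b l IHl r IHr] g; first by rewrite /= addr0 /nleaves /= mul0r.
rewrite !vsum_Nd !vsum_vsum_left !vsum_vsum_right ?vsum_Nd.
have /(canRL (addrK _)) -> := IHl (fun x => g (Nd b x r)).
have /(canRL (addrK _)) -> := IHr (fun y => g (Nd b l y)).
rewrite nleaves_Nd bin2D !natrD /dweight /hweight natrM !sign_degv.
rewrite -[(-1) ^+ deg l]signr_odd.
by case: b; case: (odd (deg l)); rewrite /= ?vsum0; ring.
Qed.

End VertexSums.
Arguments vsum_ext {F b0 w g} g' {t pre}.
Arguments dweight {F}.
Arguments hweight {F}.

Section KoszulSymmetry.
Variable F : fieldType.

Lemma sign_odd n : (-1) ^+ n = (if odd n then -1 else 1 : F).
Proof. by rewrite -signr_odd; case: (odd n); rewrite ?expr1 ?expr0. Qed.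

Lemma swap_deg t t' e : swap1 t t' e -> deg t' = deg t.
Proof. by elim=> /= *; lia. Qed.

Lemma swap_nleaves t t' e : swap1 t t' e -> nleaves t' = nleaves t.
Proof. by elim=> /= *; rewrite !nleaves_Nd; lia. Qed.

Lemma swap_nvert t t' e : swap1 t t' e -> nvert t' = nvert t.
Proof. by elim=> /= *; lia. Qed.

Definition koszul_sym (g : tree -> F) :=
  forall u u' e, swap1 u u' e -> g u' = (-1) ^+ e * g u.

Lemma vsum_swap b0 (w : nat -> nat -> F) t t' e :
  (forall a b, w a b = w b a) ->
  swap1 t t' e -> forall g pre, koszul_sym g ->
  vsum b0 w g t' pre = (-1) ^+ e * vsum b0 w g t pre.
Proof.
move=> wC; elim=> [b l r|b l l' r e' Hs IH|b l r r' e' Hs IH] g pre Hg /=.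
- rewrite (vsum_ext (fun x => (-1) ^+ (deg l * deg x) * g (Nd b l x)) (t := r));
    last by move=> u _; rewrite (Hg _ _ _ (sw_root b l u)).
  rewrite (vsum_ext (fun y => (-1) ^+ (deg r * deg y) * g (Nd b y r)) (t := l));
    last by move=> u _; rewrite (Hg _ _ _ (sw_root b u r)) mulnC.
  rewrite !vsum_sign_deg ![vsum _ _ _ _ (_ + _)]vsum_pre.
  rewrite (Hg _ _ _ (sw_root (~~ b) l r)) wC.
  move: (vsum _ _ _ l 0) (vsum _ _ _ r 0) (g _) => X Y Z.
  rewrite !sign_odd !oddD !oddM ?oddS.
  by case: (b == b0); case: (odd pre); case: (odd (degv b));
    case: (odd (deg l)); case: (odd (deg r)); rewrite /=; ring.
- have Hc : koszul_sym (fun x => g (Nd b x r)) by move=> ? ? ? ?; apply/Hg/sw_left.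
  rewrite IH // (swap_nleaves Hs) (swap_deg Hs) (Hg _ _ _ (sw_left (~~ b) r Hs)).
  rewrite (vsum_ext (fun y => (-1) ^+ e' * g (Nd b l y)) (t := r));
    last by move=> u _; rewrite (Hg _ _ _ (sw_left b u Hs)).
  by rewrite vsumZ; case: (b == b0); ring.
- have Hc : koszul_sym (fun x => g (Nd b l x)) by move=> ? ? ? ?; apply/Hg/sw_right.
  rewrite IH // (swap_nleaves Hs) (Hg _ _ _ (sw_right (~~ b) l Hs)).
  rewrite (vsum_ext (fun y => (-1) ^+ e' * g (Nd b y r)) (t := l));
    last by move=> u _; rewrite (Hg _ _ _ (sw_right b u Hs)).
  by rewrite vsumZ; case: (b == b0); ring.
Qed.

Lemma Tc_vsum n b0 (w : nat -> nat -> F) f :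
  (forall a b, w a b = w b a) -> Tc n f -> Tc n (fun t => vsum b0 w f t 0).
Proof.
move=> wC [supp sym]; split=> [t Ht|t t' e Hs].
  rewrite (vsum_ext (fun _ => 0)) ?vsum0 // => u Hu.
  by apply: supp; rewrite /valid (flip_leaves Hu).
by apply: vsum_swap => // u u' e' Hu; apply: sym.
Qed.

Lemma Tc_dpsi n (f : tree -> F) : Tc n f -> Tc n (dpsi f).
Proof.
move=> /(Tc_vsum true (w := dweight)) [] // supp sym.
by split=> [t|t t' e]; rewrite !dpsiE; [apply: supp|apply: sym].
Qed.

Lemma Tc_Hop n (f : tree -> F) : Tc n f -> Tc n (Hop f).
Proof.
move=> /(Tc_vsum false (w := hweight)) [] => [a b|supp sym]; first by rewrite /hweight mulnC.
split=> [t Ht|t t' e Hs]; rewrite !HopE; first by rewrite supp // mulr0.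
by rewrite (sym _ _ _ Hs) (swap_nvert Hs) mulrCA.
Qed.

End KoszulSymmetry.

Lemma nleaves_gt0 t : (0 < nleaves t)%N.
Proof. by rewrite /nleaves; elim: t => //= b l IHl r IHr; rewrite size_cat addn_gt0 IHl. Qed.

Lemma nleaves1 t : nleaves t = 1%N -> exists i, t = Lf i.
Proof.
case: t => [i|b l r]; first by exists i.
by move: (nleaves_gt0 l) (nleaves_gt0 r); rewrite nleaves_Nd; lia.
Qed.

Lemma nleaves3 s : nleaves s = 3%N ->
  exists b1 b2 i j k, s = Nd b1 (Nd b2 (Lf i) (Lf j)) (Lf k)
                   \/ s = Nd b1 (Lf i) (Nd b2 (Lf j) (Lf k)).
Proof.
case: s => [//|b1 l r]; rewrite nleaves_Nd => H.
have [g1 g2] := (nleaves_gt0 l, nleaves_gt0 r).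
case: l H g1 => [i|b2 l1 l2] H g1.
  case: r H g2 => [k|b2 r1 r2]; rewrite ?nleaves_Nd /nleaves //= => H _.
  have [/nleaves1 [j ->] /nleaves1 [k ->]] : nleaves r1 = 1%N /\ nleaves r2 = 1%N.
    by move: (nleaves_gt0 r1) (nleaves_gt0 r2) H; rewrite /nleaves; lia.
  by do 5 eexists; right.
move: H (nleaves_gt0 l1) (nleaves_gt0 l2); rewrite nleaves_Nd => H h1 h2.
have /nleaves1 [i ->] : nleaves l1 = 1%N by lia.
have /nleaves1 [j ->] : nleaves l2 = 1%N by lia.
have /nleaves1 [k ->] : nleaves r = 1%N by lia.
by do 5 eexists; left.
Qed.

Lemma perm_eq_iota3 i j k : perm_eq [:: i; j; k] [:: 0; 1; 2]%N ->
  (i, j, k) = (0, 1, 2)%N \/ (i, j, k) = (0, 2, 1)%N \/ (i, j, k) = (1, 0, 2)%N \/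
  (i, j, k) = (1, 2, 0)%N \/ (i, j, k) = (2, 0, 1)%N \/ (i, j, k) = (2, 1, 0)%N.
Proof.
move=> H; have : [&& i \in [:: 0; 1; 2], j \in [:: 0; 1; 2] & k \in [:: 0; 1; 2]]%N.
  by rewrite -!(perm_mem H) !inE !eqxx ?orbT.
rewrite !inE => /and3P [Hi Hj Hk]; move: H.
case/or3P: Hi => /eqP ->; case/or3P: Hj => /eqP ->; case/or3P: Hk => /eqP -> //= _.
all: by do ?[left; reflexivity | right].
Qed.

Lemma valid3_cases (P : tree -> Prop) :
  (forall b1 b2, P (Nd b1 (Nd b2 (Lf 0) (Lf 1)) (Lf 2))) ->
  (forall b1 b2, P (Nd b1 (Nd b2 (Lf 0) (Lf 2)) (Lf 1))) ->
  (forall b1 b2, P (Nd b1 (Nd b2 (Lf 1) (Lf 0)) (Lf 2))) ->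
  (forall b1 b2, P (Nd b1 (Nd b2 (Lf 1) (Lf 2)) (Lf 0))) ->
  (forall b1 b2, P (Nd b1 (Nd b2 (Lf 2) (Lf 0)) (Lf 1))) ->
  (forall b1 b2, P (Nd b1 (Nd b2 (Lf 2) (Lf 1)) (Lf 0))) ->
  (forall b1 b2, P (Nd b1 (Lf 0) (Nd b2 (Lf 1) (Lf 2)))) ->
  (forall b1 b2, P (Nd b1 (Lf 0) (Nd b2 (Lf 2) (Lf 1)))) ->
  (forall b1 b2, P (Nd b1 (Lf 1) (Nd b2 (Lf 0) (Lf 2)))) ->
  (forall b1 b2, P (Nd b1 (Lf 1) (Nd b2 (Lf 2) (Lf 0)))) ->
  (forall b1 b2, P (Nd b1 (Lf 2) (Nd b2 (Lf 0) (Lf 1)))) ->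
  (forall b1 b2, P (Nd b1 (Lf 2) (Nd b2 (Lf 1) (Lf 0)))) ->
  forall s, valid 3 s -> P s.
Proof.
move=> H1 H2 H3 H4 H5 H6 H7 H8 H9 H10 H11 H12 s val_s.
have [b1 [b2 [i [j [k [Es|Es]]]]]] := nleaves3 (perm_size val_s); subst s.
  by case: (perm_eq_iota3 val_s) => [|[|[|[|[|]]]]] [-> -> ->].
by case: (perm_eq_iota3 val_s) => [|[|[|[|[|]]]]] [-> -> ->].
Qed.

Section Corelations.
Variable F : fieldType.
Implicit Types g : tree -> F.

Lemma in_s2R_ext g1 g2 : (forall s, valid 3 s -> g1 s = g2 s) -> in_s2R g1 -> in_s2R g2.
Proof. by move=> E [c Hc]; exists c => s Hs; rewrite -E // Hc. Qed.

Lemma in_s2R0 : in_s2R (fun _ => 0 : F).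
Proof. by exists (fun _ => 0) => s _; rewrite big1 // => i _; rewrite mul0r. Qed.

Lemma in_s2RD g1 g2 : in_s2R g1 -> in_s2R g2 -> in_s2R (fun s => g1 s + g2 s).
Proof.
move=> [c1 H1] [c2 H2]; exists (fun i => c1 i + c2 i) => s Hs.
by rewrite H1 // H2 // -big_split; apply: eq_bigr => i _; rewrite mulrDl.
Qed.

Lemma in_s2RZ (k : F) g : in_s2R g -> in_s2R (fun s => k * g s).
Proof.
move=> [c H]; exists (fun i => k * c i) => s Hs.
by rewrite H // mulr_sumr; apply: eq_bigr => i _; rewrite mulrA.
Qed.

Definition s2R_comb (c : 'I_6 -> F) (s : tree) : F :=
  c (@Ordinal 6 0 isT) * s2R_gen F (@Ordinal 6 0 isT) s
  + c (@Ordinal 6 1 isT) * s2R_gen F (@Ordinal 6 1 isT) s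
  + c (@Ordinal 6 2 isT) * s2R_gen F (@Ordinal 6 2 isT) s
  + c (@Ordinal 6 3 isT) * s2R_gen F (@Ordinal 6 3 isT) s
  + c (@Ordinal 6 4 isT) * s2R_gen F (@Ordinal 6 4 isT) s
  + c (@Ordinal 6 5 isT) * s2R_gen F (@Ordinal 6 5 isT) s.

Lemma s2R_combE c s : \sum_(i < 6) c i * s2R_gen F i s = s2R_comb c s.
Proof.
rewrite !big_ord_recl big_ord0 addr0 /s2R_comb !addrA.
by congr (_ + _ + _ + _ + _ + _); congr (c _ * s2R_gen F _ s); apply: val_inj.
Qed.

(* Each generator is supported on two trees, so the coordinates of an
   element of s^2 R can be read off from its values. *)
Definition s2R_coord g (i : 'I_6) : F :=
  match val i with
  | 0 => g (Nd MU (Nd MU (Lf 0) (Lf 1)) (Lf 2))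
  | 1 => - g (Nd MU (Nd MU (Lf 0) (Lf 2)) (Lf 1))
  | 2 => g (Nd BE (Nd BE (Lf 0) (Lf 1)) (Lf 2))
  | 3 => g (Nd BE (Nd MU (Lf 1) (Lf 2)) (Lf 0))
  | 4 => g (Nd BE (Nd MU (Lf 0) (Lf 2)) (Lf 1))
  | _ => g (Nd BE (Nd MU (Lf 0) (Lf 1)) (Lf 2))
  end.

Lemma in_s2R_coord g :
  (forall s, valid 3 s -> g s = s2R_comb (s2R_coord g) s) -> in_s2R g.
Proof. by move=> H; exists (s2R_coord g) => s Hs; rewrite s2R_combE H. Qed.

(* The relations are homogeneous: twisting by (-1)^deg preserves s^2 R. *)
Lemma in_s2R_degsign g : in_s2R g -> in_s2R (fun s => (-1) ^+ deg s * g s).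
Proof.
move=> [c H]; exists (fun i => (if (val i < 3)%N then 1 else -1) * c i) => s Hs.
rewrite H // !s2R_combE; move: s Hs; apply: valid3_cases => b1 b2.
all: by case: b1; case: b2; rewrite /s2R_comb /s2R_gen /cls /= sign_odd /=; ring.
Qed.

Lemma in_s2R_vsum b0 (w : nat -> nat -> F) t (G : tree -> tree -> F) :
  (forall x, flip b0 t x -> in_s2R (fun s => G s x)) ->
  in_s2R (fun s => vsum b0 w (G s) t 0).
Proof.
elim: t G => [i|b l IHl r IHr] G H; first exact: in_s2R0.
apply: (in_s2R_ext (fun s _ => esym (vsum_Nd b0 w (G s) b l r))).
apply: in_s2RD; [apply: in_s2RD|].
- have [Eb|_] := eqVneq b b0.
    by apply: in_s2RZ; apply: H; rewrite Eb; apply: flip_root.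
  by apply: (in_s2R_ext (g1 := fun _ => 0)) => [s _|]; rewrite ?mul0r //; apply: in_s2R0.
- by apply: in_s2RZ; apply: (IHl (fun s x => G s (Nd b x r))) => x Hx; apply/H/flip_left.
- by apply: in_s2RZ; apply: (IHr (fun s y => G s (Nd b l y))) => y Hy; apply/H/flip_right.
Qed.

End Corelations.

Ltac expand_parities := repeat match goal with
  | |- context [(0 + ?x)%N] => rewrite (add0n x)
  | |- context [odd (?m + ?n)] => rewrite (oddD m n)
  | |- context [odd (?m * ?n)] => rewrite (oddM m n)
  | |- context [odd ?m.+1] => rewrite (oddS m)
  end.
Ltac case_parities := repeat match goal with
  | |- context [odd (deg ?X)] => case: (odd (deg X))
  end.

Definition is_d_or_h (F : fieldType) (b0 : bool) (w : nat -> nat -> F) : Prop :=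
  (b0 = true /\ w = dweight) \/ (b0 = false /\ w = hweight).

(* A structurally recursive form of [kinv], which computes on explicit
   token lists. *)
Fixpoint kinv_head (a : nat * nat) (l : seq (nat * nat)) : nat :=
  if l is x :: l' then ((if x.1 < a.1 then a.2 * x.2 else 0) + kinv_head a l')%N
  else 0.

Fixpoint kinv_rec (l : seq (nat * nat)) : nat :=
  if l is a :: l' then (kinv_head a l' + kinv_rec l')%N else 0.

Lemma kinv_recE l : kinv l = kinv_rec l.
Proof.
elim: l => //= a l ->; congr (_ + _)%N.
by elim: l => [|x l IH] /=; rewrite ?big_nil // big_cons -IH; case: ifP.
Qed.

Section Grafting.
Variable F : fieldType.
Variables (b0 : bool) (w : nat -> nat -> F) (A B C : tree).
Notation gr s := (graft3 s A B C).

(* The part of [vsum b0 w g (gr s) pre] coming from the vertices of the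
   arity-3 piece s (G is g precomposed with grafting) ... *)
Fixpoint vsum_top (G : tree -> F) (s : tree) (pre : nat) : F :=
  match s with
  | Lf _ => 0
  | Nd b l r =>
     (if b == b0 then (-1) ^+ pre * w (nleaves (gr l)) (nleaves (gr r)) * G (Nd (~~ b) l r)
      else 0)
     + vsum_top (fun x => G (Nd b x r)) l (pre + degv b)%N
     + vsum_top (fun y => G (Nd b l y)) r (pre + degv b + deg (gr l))%N
  end.

(* ... and the part coming from the vertices of the blocks A, B, C. *)
Fixpoint vsum_blocks (g : tree -> F) (s : tree) (pre : nat) : F :=
  match s with
  | Lf i => vsum b0 w g (gr (Lf i)) pre
  | Nd b l r =>
     vsum_blocks (fun x => g (Nd b x (gr r))) l (pre + degv b)%N
     + vsum_blocks (fun y => g (Nd b (gr l) y)) r (pre + degv b + deg (gr l))%N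
  end.

Lemma vsum_graft g s pre :
  vsum b0 w g (gr s) pre = vsum_top (fun s' => g (gr s')) s pre + vsum_blocks g s pre.
Proof.
elim: s g pre => [i|b l IHl r IHr] g pre; first by rewrite /= add0r.
by rewrite /= IHl IHr /=; ring.
Qed.

Lemma vsum_top_pre G s pre : vsum_top G s pre = (-1) ^+ pre * vsum_top G s 0.
Proof.
have shift : forall p k, vsum_top G s (p + k) = (-1) ^+ p * vsum_top G s k.
  elim: s G => [_ _|b l IHl r IHr G] p k /=; first by rewrite mulr0.
  by rewrite -!addnA IHl IHr exprD; case: eqP => _; ring.
by rewrite -shift addn0.
Qed.

(* The top part with Koszul signs taken in the arity-3 tree alone; only the
   weights still see the blocks. *)
Fixpoint vsum_top3 (G : tree -> F) (s : tree) (p : nat) : F :=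
  match s with
  | Lf _ => 0
  | Nd b l r =>
     (if b == b0 then (-1) ^+ p * w (nleaves (gr l)) (nleaves (gr r)) * G (Nd (~~ b) l r)
      else 0)
     + vsum_top3 (fun x => G (Nd b x r)) l (p + degv b)%N
     + vsum_top3 (fun y => G (Nd b l y)) r (p + degv b + deg l)%N
  end.

Lemma vsum_top3_ext G G' s p :
  (forall u, flip b0 s u -> G u = G' u) -> vsum_top3 G s p = vsum_top3 G' s p.
Proof.
elim: s G G' p => //= b l IHl r IHr G G' p E.
rewrite (IHl _ (fun x => G' (Nd b x r))); last by move=> u ?; apply/E/flip_left.
rewrite (IHr _ (fun y => G' (Nd b l y))); last by move=> u ?; apply/E/flip_right.
by case: eqP => // Eb; rewrite E // Eb; apply: flip_root.
Qed.

(* The Koszul sign of the decomposition absorbs the degrees of the blocks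
   passed over by the top vertices. *)
Lemma vsum_top_ksign G s : valid 3 s ->
  ksign F s A B C * vsum_top G s 0
  = vsum_top3 (fun s' => ksign F s' A B C * G s') s 0.
Proof.
move: s; apply: valid3_cases => b1 b2; case: b1; case: b2.
all: rewrite {1}/ksign kinv_recE /= /ksign !kinv_recE /= !sign_odd; expand_parities; rewrite /=.
all: by case_parities; case: b0; rewrite /=; ring.
Qed.

Hypothesis dh : is_d_or_h b0 w.

(* The arity-3 computation: psi and h, applied at one vertex of an arity-3
   tree with any weights coming from the blocks, preserve s^2 R. *)
Lemma vsum_top3_s2R c : in_s2R (fun s => vsum_top3 (s2R_comb c) s 0).
Proof.
apply: in_s2R_coord; apply: valid3_cases => b1 b2; case: b1; case: b2.
all: rewrite /s2R_coord /s2R_comb /= /s2R_gen /cls /=.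
all: by case: dh => [] [-> ->]; rewrite /dweight /hweight /= ?nleaves_Nd !sign_odd /=
  ?natrD ?natrM; ring.
Qed.

Lemma vsum_top_s2R G pre :
  in_s2R (fun s => ksign F s A B C * G s) ->
  in_s2R (fun s => ksign F s A B C * vsum_top G s pre).
Proof.
move=> [c Hc].
apply: (@in_s2R_ext _ (fun s => (-1) ^+ pre * vsum_top3 (s2R_comb c) s 0));
  last by apply/in_s2RZ/vsum_top3_s2R.
move=> s Hs; rewrite vsum_top_pre mulrCA vsum_top_ksign //; congr (_ * _).
apply: vsum_top3_ext => u Hu; have Hv : valid 3 u by rewrite /valid (flip_leaves Hu).
by rewrite Hc // s2R_combE.
Qed.

End Grafting.

Section Blocks.
Variable F : fieldType.
Variables (b0 : bool) (w : nat -> nat -> F) (A B C : tree).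
Notation gr s := (graft3 s A B C).

Fixpoint has_leaf (k : nat) (s : tree) : bool :=
  match s with Lf i => i == k | Nd _ l r => has_leaf k l || has_leaf k r end.

(* Total degree met in preorder before the block grafted on leaf k. *)
Fixpoint block_offset (k : nat) (s : tree) : nat :=
  match s with
  | Lf _ => 0
  | Nd b l r => (degv b + (if has_leaf k l then block_offset k l
                           else deg (gr l) + block_offset k r))%N
  end.

Lemma vsum_blocksE g s pre : valid 3 s ->
  ksign F s A B C * vsum_blocks b0 w A B C g s pre =
  (-1) ^+ pre *
  (vsum b0 w (fun x => ksign F s A B C * (-1) ^+ block_offset 0 s * g (graft3 s x B C)) A 0
   + vsum b0 w (fun x => ksign F s A B C * (-1) ^+ block_offset 1 s * g (graft3 s A x C)) B 0
   + vsum b0 w (fun x => ksign F s A B C * (-1) ^+ block_offset 2 s * g (graft3 s A B x)) C 0).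
Proof.
rewrite !vsumZ; move: s; apply: valid3_cases => b1 b2; case: b1; case: b2; rewrite /=.
all: repeat match goal with |- context [vsum ?b ?w ?g ?t (?p + ?q)%N] =>
       rewrite (vsum_pre b w g t (p + q)) end.
all: rewrite /ksign !kinv_recE /= !sign_odd; expand_parities; rewrite /=.
all: by case_parities; case: (odd pre); rewrite /=; ring.
Qed.

Lemma ksign_block0 s x : valid 3 s -> odd (deg x) = ~~ odd (deg A) ->
  ksign F s A B C * (-1) ^+ block_offset 0 s = (-1) ^+ deg s * ksign F s x B C.
Proof.
move=> + Hx; move: s; apply: valid3_cases => b1 b2; case: b1; case: b2.
all: rewrite /ksign !kinv_recE /= !sign_odd; expand_parities; rewrite /= ?Hx.
all: by case_parities; rewrite /=; ring.
Qed.

Lemma ksign_block1 s x : valid 3 s -> odd (deg x) = ~~ odd (deg B) ->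
  ksign F s A B C * (-1) ^+ block_offset 1 s
  = (-1) ^+ deg A * ((-1) ^+ deg s * ksign F s A x C).
Proof.
move=> + Hx; move: s; apply: valid3_cases => b1 b2; case: b1; case: b2.
all: rewrite /ksign !kinv_recE /= !sign_odd; expand_parities; rewrite /= ?Hx.
all: by case_parities; rewrite /=; ring.
Qed.

Lemma ksign_block2 s x : valid 3 s -> odd (deg x) = ~~ odd (deg C) ->
  ksign F s A B C * (-1) ^+ block_offset 2 s
  = (-1) ^+ (deg A + deg B) * ((-1) ^+ deg s * ksign F s A B x).
Proof.
move=> + Hx; move: s; apply: valid3_cases => b1 b2; case: b1; case: b2.
all: rewrite /ksign !kinv_recE /= !sign_odd; expand_parities; rewrite /= ?Hx.
all: by case_parities; rewrite /=; ring.
Qed.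

End Blocks.


Fixpoint ctx_deg (c : ctx) : nat :=
  match c with
  | Hole => 0
  | CL b c' r => degv b + ctx_deg c' + deg r
  | CR b l c' => degv b + deg l + ctx_deg c'
  end.

Fixpoint ctx_nleaves (c : ctx) : nat :=
  match c with
  | Hole => 0
  | CL b c' r => ctx_nleaves c' + nleaves r
  | CR b l c' => nleaves l + ctx_nleaves c'
  end.

Fixpoint ctx_nvert (c : ctx) : nat :=
  match c with
  | Hole => 0
  | CL b c' r => (ctx_nvert c' + nvert r).+1
  | CR b l c' => (nvert l + ctx_nvert c').+1
  end.

Lemma deg_plug c t : deg (plug c t) = (ctx_deg c + deg t)%N.
Proof. by elim: c => //= [b c' IH r|b l c' IH]; rewrite IH; lia. Qed.

Lemma nleaves_plug c t : nleaves (plug c t) = (ctx_nleaves c + nleaves t)%N.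
Proof. by elim: c => //= [b c' IH r|b l c' IH]; rewrite nleaves_Nd IH; lia. Qed.

Lemma nvert_plug c t : nvert (plug c t) = (ctx_nvert c + nvert t)%N.
Proof. by elim: c => //= [b c' IH r|b l c' IH]; rewrite IH; lia. Qed.

Lemma deg_graft3 A B C s : valid 3 s ->
  deg (graft3 s A B C) = (deg s + deg A + deg B + deg C)%N.
Proof. by move: s; apply: valid3_cases => b1 b2 /=; lia. Qed.

Lemma nleaves_graft3 A B C s : valid 3 s ->
  nleaves (graft3 s A B C) = (nleaves A + nleaves B + nleaves C)%N.
Proof. by move: s; apply: valid3_cases => b1 b2 /=; rewrite !nleaves_Nd; lia. Qed.

Lemma nvert_graft3 A B C s : valid 3 s ->
  nvert (graft3 s A B C) = (2 + nvert A + nvert B + nvert C)%N.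
Proof. by move: s; apply: valid3_cases => b1 b2 /=; lia. Qed.

Section Contexts.
Variable F : fieldType.

Definition corelations (g : tree -> F) :=
  forall c A B C, in_s2R (fun s => ksign F s A B C * g (plug c (graft3 s A B C))).

(* The block part of a vertex sum satisfies the corelations: it is a vertex
   sum over A, B or C of coefficients obtained by changing one block. *)
Lemma vsum_blocks_s2R b0 (w : nat -> nat -> F) A B C g pre : corelations g ->
  in_s2R (fun s => ksign F s A B C * vsum_blocks b0 w A B C g s pre).
Proof.
move=> Hg; apply: (in_s2R_ext (fun s Hs => esym (vsum_blocksE b0 w A B C g pre Hs))).
apply: in_s2RZ; apply: in_s2RD; [apply: in_s2RD|]; apply: in_s2R_vsum => x /flip_odd Hx.
- apply: (in_s2R_ext (g1 := fun s => (-1) ^+ deg s * (ksign F s x B C * g (graft3 s x B C))));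
    first by move=> s Hs; rewrite (ksign_block0 F B C Hs Hx) mulrA.
  exact/in_s2R_degsign/(Hg Hole).
- apply: (in_s2R_ext (g1 := fun s =>
      (-1) ^+ deg A * ((-1) ^+ deg s * (ksign F s A x C * g (graft3 s A x C)))));
    first by move=> s Hs; rewrite (ksign_block1 F A C Hs Hx) !mulrA.
  exact/in_s2RZ/in_s2R_degsign/(Hg Hole).
- apply: (in_s2R_ext (g1 := fun s =>
      (-1) ^+ (deg A + deg B) * ((-1) ^+ deg s * (ksign F s A B x * g (graft3 s A B x)))));
    first by move=> s Hs; rewrite (ksign_block2 F A B Hs Hx) !mulrA.
  exact/in_s2RZ/in_s2R_degsign/(Hg Hole).
Qed.


Variables (b0 : bool) (w : nat -> nat -> F).
Hypothesis dh : is_d_or_h b0 w.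

(* The vertex sum of a grafted tree: its top part by the arity-3
   computation, its block part by the corelations at the edges of g. *)
Lemma vsum_graft3_s2R g pre A B C : corelations g ->
  in_s2R (fun s => ksign F s A B C * vsum b0 w g (graft3 s A B C) pre).
Proof.
move=> Hg; apply: (in_s2R_ext (g1 := fun s =>
    ksign F s A B C * vsum_top b0 w A B C (fun s' => g (graft3 s' A B C)) s pre
    + ksign F s A B C * vsum_blocks b0 w A B C g s pre));
  first by move=> s _; rewrite vsum_graft mulrDr.
apply: in_s2RD; last exact: vsum_blocks_s2R.
exact: vsum_top_s2R (Hg Hole A B C).
Qed.

(* The corelation condition for [vsum b0 w g] at the internal edges lying
   under the context c. *)
Definition plug_s2R (c : ctx) : Prop :=
  forall g pre A B C, corelations g ->
  in_s2R (fun s => ksign F s A B C * vsum b0 w g (plug c (graft3 s A B C)) pre).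

Lemma plug_s2R_CL b c' r : plug_s2R c' -> plug_s2R (CL b c' r).
Proof.
move=> IH g pre A B C Hg.
apply: (in_s2R_ext (g1 := fun s =>
    (if b == b0 then (-1) ^+ pre * w (ctx_nleaves c' + (nleaves A + nleaves B + nleaves C))%N
                                     (nleaves r) else 0)
      * (ksign F s A B C * g (plug (CL (~~ b) c' r) (graft3 s A B C)))
    + ksign F s A B C * vsum b0 w (fun x => g (Nd b x r)) (plug c' (graft3 s A B C)) (pre + degv b)
    + (-1) ^+ (pre + degv b + ctx_deg c' + deg A + deg B + deg C) * ((-1) ^+ deg s *
        vsum b0 w (fun y => ksign F s A B C * g (plug (CL b c' y) (graft3 s A B C))) r 0))).
  move=> s Hs /=; rewrite [in RHS](vsum_pre b0 w _ r) vsumZ nleaves_plug nleaves_graft3 //.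
  set e := (pre + degv b + ctx_deg c' + deg A + deg B + deg C)%N.
  have -> : (pre + degv b + deg (plug c' (graft3 s A B C)) = e + deg s)%N.
    by rewrite deg_plug deg_graft3 // /e; lia.
  by rewrite exprD; case: eqP => _; ring.
apply: in_s2RD; [apply: in_s2RD|].
- exact/in_s2RZ/(Hg (CL (~~ b) c' r)).
- by apply: IH => c'' A' B' C'; apply: (Hg (CL b c'' r)).
- apply/in_s2RZ/in_s2R_degsign.
  by apply: in_s2R_vsum => y _; apply: (Hg (CL b c' y)).
Qed.

Lemma plug_s2R_CR b l c' : plug_s2R c' -> plug_s2R (CR b l c').
Proof.
move=> IH g pre A B C Hg.
apply: (in_s2R_ext (g1 := fun s =>
    (if b == b0 then (-1) ^+ pre * w (nleaves l)
                       (ctx_nleaves c' + (nleaves A + nleaves B + nleaves C))%N else 0)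
      * (ksign F s A B C * g (plug (CR (~~ b) l c') (graft3 s A B C)))
    + (-1) ^+ (pre + degv b) *
        vsum b0 w (fun x => ksign F s A B C * g (plug (CR b x c') (graft3 s A B C))) l 0
    + ksign F s A B C
      * vsum b0 w (fun y => g (Nd b l y)) (plug c' (graft3 s A B C)) (pre + degv b + deg l))).
  move=> s Hs /=; rewrite [in RHS](vsum_pre b0 w _ l) vsumZ nleaves_plug nleaves_graft3 //.
  by case: eqP => _; ring.
apply: in_s2RD; [apply: in_s2RD|].
- exact/in_s2RZ/(Hg (CR (~~ b) l c')).
- by apply: in_s2RZ; apply: in_s2R_vsum => x _; apply: (Hg (CR b x c')).
- by apply: IH => c'' A' B' C'; apply: (Hg (CR b l c'')).
Qed.

Lemma plug_s2R_all c : plug_s2R c.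
Proof.
elim: c => [|b c' IH r|b l c' IH]; last 2 first.
- exact: plug_s2R_CL.
- exact: plug_s2R_CR.
by move=> g pre A B C; apply: vsum_graft3_s2R.
Qed.

Lemma corelations_vsum f : corelations f -> corelations (fun t => vsum b0 w f t 0).
Proof. by move=> Hf c A B C; apply: plug_s2R_all. Qed.

End Contexts.

Lemma relabel_nleaves p t : nleaves (relabel p t) = nleaves t.
Proof. by elim: t => //= b l IHl r IHr; rewrite !nleaves_Nd IHl IHr. Qed.

Lemma relabel_deg p t : deg (relabel p t) = deg t.
Proof. by elim: t => //= b l IHl r IHr; rewrite IHl IHr. Qed.

Lemma relabel_nvert p t : nvert (relabel p t) = nvert t.
Proof. by elim: t => //= b l IHl r IHr; rewrite IHl IHr. Qed.

Lemma nleaves_nvert t : nleaves t = (nvert t).+1.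
Proof. by elim: t => //= b l IHl r IHr; rewrite nleaves_Nd IHl IHr; lia. Qed.

Lemma valid_Lf n i : valid n (Lf i) -> n = 1%N /\ i = 0%N.
Proof.
rewrite /valid => Hp; have := perm_size Hp; rewrite size_iota /= => En.
by subst n; move: Hp => /perm_mem/(_ i); rewrite !inE eqxx => /esym/eqP.
Qed.

Section Retract.
Variable F : fieldType.
Implicit Types f : tree -> F.

Lemma vsum_relabel b0 (w : nat -> nat -> F) p f t pre :
  vsum b0 w (fun u => f (relabel p u)) t pre = vsum b0 w f (relabel p t) pre.
Proof.
elim: t f pre => //= b l IHl r IHr f pre.
rewrite -(IHl (fun x => f (Nd b x (relabel p r)))) -(IHr (fun x => f (Nd b (relabel p l) x))).
by rewrite !relabel_nleaves relabel_deg.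
Qed.

Lemma Gshriek_dpsi n f : Gshriek n f -> Gshriek n (dpsi f).
Proof.
move=> [Tc_f corel_f]; split; first exact: Tc_dpsi.
move=> c A B C; apply: (in_s2R_ext (g1 := fun s =>
    ksign F s A B C * vsum true dweight f (plug c (graft3 s A B C)) 0)).
  by move=> s _; rewrite dpsiE.
by apply: corelations_vsum corel_f c A B C; left.
Qed.

(* On the trees met by the corelation condition the normalising factor of H
   is constant, since all of them have the same number of vertices. *)
Lemma Gshriek_Hop n f : Gshriek n f -> Gshriek n (Hop f).
Proof.
move=> [Tc_f corel_f]; split; first exact: Tc_Hop.
move=> c A B C; apply: (in_s2R_ext (g1 := fun s =>
    ('C((ctx_nvert c + (2 + nvert A + nvert B + nvert C)).+1, 2))%:R^-1 *
    (ksign F s A B C * vsum false hweight f (plug c (graft3 s A B C)) 0))).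
  by move=> s Hs; rewrite HopE nvert_plug nvert_graft3 // mulrCA.
by apply/in_s2RZ/(corelations_vsum _ corel_f); right.
Qed.

Lemma dpsi_dpsi f t : dpsi (dpsi f) t = 0.
Proof.
rewrite dpsiE (vsum_ext (fun u => vsum true dweight f u 0)) ?vsum_d_d //.
by move=> u _; apply: dpsiE.
Qed.

Lemma coaug_Nd n (x : F) b l r : coaug n x (Nd b l r) = 0.
Proof. by []. Qed.

Lemma Gshriek_coaug n (x : F) : Gshriek n (coaug n x).
Proof.
split; first split.
- by move=> [[|i]|b l r] //=; case: eqP => // ->.
- by move=> t t' e [] *; rewrite !coaug_Nd mulr0.
- move=> c A B C; apply: (in_s2R_ext (g1 := fun _ => 0)); last exact: in_s2R0.
  move=> s Hs; have : (0 < nvert (plug c (graft3 s A B C)))%N.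
    by rewrite nvert_plug nvert_graft3 // addnC.
  by case: (plug _ _) => // *; rewrite coaug_Nd mulr0.
Qed.

Lemma counit_dpsi n f : counit n (dpsi f) = 0.
Proof. by rewrite /counit; case: eqP. Qed.

Lemma dpsi_coaug n (x : F) t : dpsi (coaug n x) t = 0.
Proof. by rewrite dpsiE (vsum_ext (fun _ => 0)) ?vsum0 // => u []. Qed.

Lemma dpsi_relabel n (s : 'S_n) f t :
  dpsi (fun u => f (relabel (permf s) u)) t = dpsi f (relabel (permf s) t).
Proof. by rewrite !dpsiE vsum_relabel. Qed.

Lemma Hop_relabel n (s : 'S_n) f t :
  Hop (fun u => f (relabel (permf s) u)) t = Hop f (relabel (permf s) t).
Proof. by rewrite !HopE vsum_relabel relabel_nvert. Qed.

Hypothesis charF0 : [pchar F] =i pred0.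

(* The homotopy formula: by [vsum_dh_hd], d_psi H + H d_psi multiplies the
   coefficient of a tree with n vertices by C(n+1,2)/C(n+1,2) = 1 when n > 0
   (characteristic 0), while for n = 0 both sides vanish: the only valid
   vertex-free tree is the unit tree, which is fixed by coaug o counit. *)
Lemma homotopy_formula n f : Gshriek n f -> forall t,
  f t - coaug n (counit n f) t = dpsi (Hop f) t + Hop (dpsi f) t.
Proof.
move=> [[supp _] _] t.
have -> : dpsi (Hop f) t + Hop (dpsi f) t
    = ('C((nvert t).+1, 2))%:R^-1 * ('C(nleaves t, 2))%:R * f t.
  rewrite -mulrA -vsum_dh_hd mulrDr dpsiE -vsumZ HopE; congr (_ + _).
    by apply: vsum_ext => u Hu; rewrite HopE (flip_nvert Hu).
  by congr (_ * _); apply: vsum_ext => u _; rewrite dpsiE.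
rewrite nleaves_nvert; case: t => [i|b l r].
  rewrite /= bin_small // mulr0 mul0r /coaug /counit.
  have [/valid_Lf [-> ->]|invalid] := boolP (valid n (Lf i)); first by rewrite /= subrr.
  rewrite supp // sub0r; apply/eqP; rewrite oppr_eq0.
  case: i invalid => [|i] //= invalid.
  by have [En|//] := eqVneq n 1%N; rewrite En in invalid.
have /pcharf0P nat_inj := charF0.
have binom_nz : ('C((nvert (Nd b l r)).+1, 2))%:R != 0 :> F.
  by rewrite nat_inj -lt0n bin_gt0.
by rewrite coaug_Nd subr0 mulVf ?mul1r.
Qed.

(* Hence H_*(G^¡, d_psi) = I: every cycle is homologous to its image under
   coaug o counit, through the boundary of H applied to it. *)
Lemma cycle_homologous n f : Gshriek n f -> (forall t, dpsi f t = 0) ->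
  exists g, Gshriek n g /\ forall t, f t = coaug n (counit n f) t + dpsi g t.
Proof.
move=> Gf cycle_f; exists (Hop f); split=> [|t]; first exact: Gshriek_Hop.
have Hd0 : Hop (dpsi f) t = 0.
  by rewrite HopE (vsum_ext (fun _ => 0)) ?vsum0 ?mulr0 // => u _; apply: cycle_f.
by rewrite -[dpsi _ t]addr0 -Hd0 -(homotopy_formula Gf) addrC subrK.
Qed.

End Retract.

Theorem proposition2p8 (F : fieldType) (charF0 : [pchar F] =i pred0) :
  (* d_psi restricts to a differential on G^¡ *)
  (forall n (f : tree -> F), Gshriek n f -> Gshriek n (dpsi f)) /\
  (forall n (f : tree -> F), Gshriek n f -> forall t, dpsi (dpsi f) t = 0) /\
  (* the homotopy H restricts to G^¡ *)
  (forall n (f : tree -> F), Gshriek n f -> Gshriek n (Hop f)) /\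
  (* counit and coaugmentation are maps of dg S-modules (I, 0) <-> (G^¡, d_psi) *)
  (forall n (x : F), Gshriek n (coaug n x)) /\
  (forall n (f : tree -> F), Gshriek n f -> counit n (dpsi f) = 0) /\
  (forall n (x : F) t, dpsi (coaug n x) t = 0) /\
  (* S_n-equivariance of d_psi and H *)
  (forall n (s : 'S_n) (f : tree -> F), Gshriek n f -> forall t,
      dpsi (fun u => f (relabel (permf s) u)) t = dpsi f (relabel (permf s) t)) /\
  (forall n (s : 'S_n) (f : tree -> F), Gshriek n f -> forall t,
      Hop (fun u => f (relabel (permf s) u)) t = Hop f (relabel (permf s) t)) /\
  (* deformation retract identities *)
  (forall x : F, counit 1 (coaug 1 x) = x) /\
  (forall n (f : tree -> F), Gshriek n f -> forall t,
      f t - coaug n (counit n f) t = dpsi (Hop f) t + Hop (dpsi f) t) /\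
  (* in particular H_*(G^¡, d_psi) = I: every cycle is homologous to
     coaug (counit f) *)
  (forall n (f : tree -> F), Gshriek n f -> (forall t, dpsi f t = 0) ->
      exists g, Gshriek n g /\
        forall t, f t = coaug n (counit n f) t + dpsi g t).
Proof.
split; first exact: Gshriek_dpsi.
split; first by move=> n f _ t; apply: dpsi_dpsi.
split; first exact: Gshriek_Hop.
split; first exact: Gshriek_coaug.
split; first by move=> n f _; apply: counit_dpsi.
split; first exact: dpsi_coaug.
split; first by move=> n s f _ t; apply: dpsi_relabel.
split; first by move=> n s f _ t; apply: Hop_relabel.
split; first by [].
split; first exact: homotopy_formula.
exact: cycle_homologous.
Qed.
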